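(* Let $\Gamma$ be a negative-definite plumbing forest, $v$ a vertex with framing $-p<0$, and assume $\Gamma_{+1}$ is negative-definite. Then the sequence \[\mathbb{H}(\Gamma-v)\xrightarrow{\ \mathbb{A}\ }\mathbb{H}(\Gamma)\xrightarrow{\ \mathbb{B}\ }\mathbb{H}(\Gamma_{+1})\longrightarrow 0\] is exact.
   Context: A plumbing forest is a finite forest with integer vertex framings $m(v)$; its lattice is $\mathbb{Z}^{\text{vertices}}$ with pairing $(v,v)=m(v)$, $(v,w)=-1$ if $v,w$ adjacent, $0$ otherwise; negative-definite means this form is. $\mathrm{Char}(\Gamma)$: homomorphisms $k$ from the lattice to $\mathbb{Z}$ with $\langle k,x\rangle\equiv(x,x)\bmod 2$ for all $x$; $v^*=(v,-)$, $v^2=(v,v)$. Lattice homology $\mathbb{H}(\Gamma)$: the complex vector space with basis $\{1\otimes k:k\in\mathrm{Char}(\Gamma)\}$ modulo the relations (I) $1\otimes k\sim0$ if $|\langle k,u\rangle|>-u^2$ for some vertex $u$; (II) $1\otimes k\sim(-1)^{u^2}\otimes(k\mp2u^* )$ if $\langle k,u\rangle=\pm u^2$ for some vertex $u$. $\Gamma-v$ is $\Gamma$ with $v$ deleted; $\Gamma_{+1}$ is $\Gamma$ with the framing of $v$ changed to $-p+1$. For $k\in\mathrm{Char}(\Gamma-v)$ and $i\equiv p\bmod 2$, $k'_i\in\mathrm{Char}(\Gamma)$ agrees with $k$ on $w\ne v$ and takes value $i$ on $v$; $\mathbb{A}(k)=\sum_{i\equiv p\bmod 2,\ |i|\le p}1\otimes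 k'_i$ (the terms with $|i|>p$ vanish in $\mathbb{H}(\Gamma)$). For $k\in\mathrm{Char}(\Gamma)$, $k^{\pm}\in\mathrm{Char}(\Gamma_{+1})$ agree with $k$ on $w\ne v$ and $\langle k^\pm,v\rangle=\langle k,v\rangle\pm1$; $\mathbb{B}(k)=(-1/2)\otimes k^++(1/2)\otimes k^-$. These induce well-defined linear maps on lattice homology. *)

From HB Require Import structures.
From mathcomp Require Import all_boot all_order all_algebra.
From mathcomp Require Import reals.
From mathcomp.real_closed Require Export complex.
Set Implicit Arguments. Unset Strict Implicit. Unset Printing Implicit Defensive.
Import Order.TTheory GRing.Theory Num.Theory.
Local Open Scope ring_scope.

(* ---------- Plumbing graphs ----------
   A plumbing graph on the finite vertex type V is given by a framing
   m : V -> int and an adjacency relation e : rel V. *)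

Definition is_forest (V : finType) (e : rel V) : Prop :=
  [/\ symmetric e, irreflexive e &
      forall s : seq V, uniq s -> (3 <= size s)%N -> ~~ cycle e s].

Definition pair_vv (V : finType) (m : V -> int) (e : rel V) (a b : V) : int :=
  if a == b then m a else if e a b then -1 else 0.

Definition lform (V : finType) (m : V -> int) (e : rel V) (x y : V -> int) : int :=
  \sum_(a : V) \sum_(b : V) x a * y b * pair_vv m e a b.

Definition neg_definite (V : finType) (m : V -> int) (e : rel V) : Prop :=
  forall x : V -> int, (exists w, x w != 0) -> lform m e x x < 0.

(* A homomorphism k : Z^V -> Z is represented by its values k w = <k, w>
   on the basis vertices; <k, x> = sum_w k w * x w. *)
Definition Key (V : finType) := {ffun V -> int}.

Definition kapp (V : finType) (k : Key V) (x : V -> int) : int :=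
  \sum_(w : V) k w * x w.

Definition is_char (V : finType) (m : V -> int) (e : rel V) (k : Key V) : Prop :=
  forall x : V -> int, (kapp k x - lform m e x x) \in dvdz 2.

Definition dualv (V : finType) (m : V -> int) (e : rel V) (u : V) : Key V :=
  [ffun w => pair_vv m e u w].

(* ---------- Formal linear combinations ----------
   An element of the free K-vector space on Key V is represented by a finite
   list of (coefficient, generator) pairs; its coefficient function is
   [coef s].  Two lists represent the same vector iff their coef functions
   agree. *)
Definition comb (K : fieldType) (V : finType) := seq (K * Key V).

Definition coef (K : fieldType) (V : finType) (s : comb K V) (k : Key V) : K :=
  \sum_(q <- s) (if q.2 == k then q.1 else 0).

Definition in_free (K : fieldType) (V : finType) (m : V -> int) (e : rel V)
  (s : comb K V) : Prop :=
  forall k, coef s k != 0 -> is_char m e k.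

(* the basic relation vectors of lattice homology:
   (I)  1 (x) k                              if |<k,u>| > -u^2
   (II) 1 (x) k - (-1)^{u^2} (x) (k -+ 2 u-star) if <k,u> = +- u^2 *)
Definition basic_rel (K : fieldType) (V : finType) (m : V -> int) (e : rel V)
  (r : comb K V) : Prop :=
  exists (k : Key V) (u : V), is_char m e k /\
   ( (`|k u| > - m u /\ r = [:: (1, k)])
  \/ (k u = m u /\
        r = [:: (1, k); (- ((-1) ^ (m u)), [ffun w => k w - 2 * dualv m e u w])])
  \/ (k u = - m u /\
        r = [:: (1, k); (- ((-1) ^ (m u)), [ffun w => k w + 2 * dualv m e u w])]) ).

Definition in_rel (K : fieldType) (V : finType) (m : V -> int) (e : rel V)
  (s : comb K V) : Prop :=
  exists l : seq (K * comb K V),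
    (forall q, q \in l -> basic_rel m e q.2) /\
    forall k, coef s k = \sum_(q <- l) q.1 * coef q.2 k.

Definition csub (K : fieldType) (V : finType) (s t : comb K V) : comb K V :=
  s ++ [seq (- q.1, q.2) | q <- t].

Definition subv (V : finType) (v : V) := {w : V | w != v}.

Definition del_m (V : finType) (m : V -> int) (v : V) : subv v -> int :=
  fun w => m (val w).
Definition del_e (V : finType) (e : rel V) (v : V) : rel (subv v) :=
  fun a b => e (val a) (val b).

Definition plus1_m (V : finType) (m : V -> int) (v : V) (p : nat) : V -> int :=
  fun w => if w == v then - (p%:Z) + 1 else m w.

Definition kext (V : finType) (v : V) (k : Key (subv v)) (i : int) : Key V :=
  [ffun w => if insub w is Some w' then k w' else i].

(* the integers i with i = p mod 2 and |i| <= p, namely -p, -p+2, ..., p *)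
Definition Arange (p : nat) : seq int :=
  [seq (- (p%:Z) + 2 * (j%:Z)) | j <- iota 0 p.+1].

Definition mapA (K : fieldType) (V : finType) (v : V) (p : nat)
  (t : comb K (subv v)) : comb K V :=
  flatten [seq [seq (q.1, kext q.2 i) | i <- Arange p] | q <- t].

Definition kshift (V : finType) (v : V) (k : Key V) (d : int) : Key V :=
  [ffun w => if w == v then k w + d else k w].

Definition mapB (K : fieldType) (V : finType) (v : V) (s : comb K V) : comb K V :=
  flatten [seq [:: (- (1/2) * q.1, kshift v q.2 1); ((1/2) * q.1, kshift v q.2 (-1))]
          | q <- s].

Arguments del_m [V] m v _.
Arguments del_e [V] e v _ _.
Arguments mapA [K V] v p t.
Arguments kext [V] v k i.

From HB Require Import structures.
From mathcomp Require Import all_boot all_order all_algebra.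
From mathcomp Require Import reals.
From mathcomp.real_closed Require Import complex.
From mathcomp Require Import zify ring.
Set Implicit Arguments. Unset Strict Implicit. Unset Printing Implicit Defensive.
Import Order.TTheory GRing.Theory Num.Theory.
Local Open Scope ring_scope.

(* Define C : H(Gamma_{+1}) -> H(Gamma) on generators by
   C(k) = 2 sum_{l < n} k_l, where k_l is k with <k, v> raised by 1 + 2 l and
   n is the number of such steps needed to push <k, v> above p.  Both B o A
   and B o C - id telescope, to generators that relation (I) of Gamma_{+1}
   kills, and C o B - id vanishes up to relation (I) of Gamma.  B maps
   relations to relations, and C maps relations of Gamma_{+1} into
   im A + relations of Gamma.  Hence B is onto, im A <= ker B, and if
   B s ~ 0 then s ~ C (B s) + (s - C (B s)) lies in im A. *)

Section FormalCombinations.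
Variable K : fieldType.
Implicit Types V W : finType.

Lemma coef_combE V (s : comb K V) x : coef s x = \sum_(q <- s) q.1 * (q.2 == x)%:R.
Proof. by apply: eq_bigr => q _; case: (q.2 == x); rewrite ?mulr1 ?mulr0. Qed.

Lemma coef_nil V (x : Key V) : coef ([::] : comb K V) x = 0.
Proof. by rewrite /coef big_nil. Qed.

Lemma coef_consE V c a (s : comb K V) x :
  coef ((c, a) :: s) x = c * (a == x)%:R + coef s x.
Proof. by rewrite !coef_combE big_cons. Qed.

Lemma coef_seq1 V (a : Key V) x : coef [:: (1 : K, a)] x = (a == x)%:R.
Proof. by rewrite coef_consE coef_nil addr0 mul1r. Qed.

Lemma coef_seq2 V (a b : Key V) (c : K) x :
  coef [:: (1, a); (c, b)] x = (a == x)%:R + c * (b == x)%:R.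
Proof. by rewrite !coef_consE coef_nil addr0 mul1r. Qed.

Lemma coef_cat V (s t : comb K V) x : coef (s ++ t) x = coef s x + coef t x.
Proof. by rewrite /coef big_cat. Qed.

Lemma coef_csub V (s t : comb K V) x : coef (csub s t) x = coef s x - coef t x.
Proof.
rewrite coef_cat !coef_combE big_map -sumrN; congr (_ + _).
by apply: eq_bigr => q _; rewrite mulNr.
Qed.

Lemma coef_pairs V (T : Type) (r : seq T) (c : T -> K) (f : T -> Key V) x :
  coef [seq (c i, f i) | i <- r] x = \sum_(i <- r) c i * (f i == x)%:R.
Proof. by rewrite coef_combE big_map. Qed.

Lemma coef_scale V c (s : comb K V) x :
  coef [seq (c * q.1, q.2) | q <- s] x = c * coef s x.
Proof. by rewrite coef_pairs coef_combE mulr_sumr; apply: eq_bigr => q _; rewrite mulrA. Qed.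

Lemma coef_flatten V (ss : seq (comb K V)) x :
  coef (flatten ss) x = \sum_(s <- ss) coef s x.
Proof.
elim: ss => [|s ss IH] /=; first by rewrite coef_nil big_nil.
by rewrite coef_cat IH big_cons.
Qed.

Definition lincomb V (L : seq (K * comb K V)) : comb K V :=
  flatten [seq [seq (q.1 * y.1, y.2) | y <- q.2] | q <- L].

Lemma coef_lincomb V (L : seq (K * comb K V)) x :
  coef (lincomb L) x = \sum_(q <- L) q.1 * coef q.2 x.
Proof. by rewrite coef_flatten big_map; apply: eq_bigr => q _; rewrite coef_scale. Qed.

Definition extend W V (g : Key W -> comb K V) (s : comb K W) : comb K V :=
  lincomb [seq (q.1, g q.2) | q <- s].

Lemma coef_extend W V (g : Key W -> comb K V) s x :
  coef (extend g s) x = \sum_(q <- s) q.1 * coef (g q.2) x.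
Proof. by rewrite coef_lincomb big_map. Qed.

Lemma sum_extend W V (g : Key W -> comb K V) (s : comb K W) (G : Key V -> K) :
  \sum_(q <- extend g s) q.1 * G q.2 =
    \sum_(q <- s) q.1 * \sum_(y <- g q.2) y.1 * G y.2.
Proof.
rewrite big_flatten !big_map; apply: eq_bigr => q _.
by rewrite big_map mulr_sumr; apply: eq_bigr => y _; rewrite mulrA.
Qed.

Lemma sum_csub V (s t : comb K V) (G : Key V -> K) :
  \sum_(q <- csub s t) q.1 * G q.2 =
    \sum_(q <- s) q.1 * G q.2 - \sum_(q <- t) q.1 * G q.2.
Proof.
rewrite big_cat big_map -sumrN; congr (_ + _).
by apply: eq_bigr => q _; rewrite mulNr.
Qed.

Lemma coef_extend1 W V (g : Key W -> comb K V) a x :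
  coef (extend g [:: (1, a)]) x = coef (g a) x.
Proof. by rewrite coef_extend big_seq1 mul1r. Qed.

Lemma coef_extend2 W V (g : Key W -> comb K V) a c b x :
  coef (extend g [:: (1, a); (c, b)]) x = coef (g a) x + c * coef (g b) x.
Proof. by rewrite coef_extend !big_cons big_nil addr0 mul1r. Qed.

Lemma sum_coef_pairing V (s : comb K V) (T : seq (Key V)) (G : Key V -> K) :
  uniq T -> {subset map snd s <= T} ->
  \sum_(q <- s) q.1 * G q.2 = \sum_(x <- T) coef s x * G x.
Proof.
move=> uT; elim: s => [|[c a] s IH] sub /=.
  by rewrite big_nil; symmetry; apply: big1 => x _; rewrite coef_nil mul0r.
rewrite big_cons IH; last by move=> y hy; apply: sub; rewrite inE hy orbT.
have aT : a \in T by apply: sub; rewrite inE eqxx.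
under [RHS]eq_bigr => x _ do rewrite coef_consE mulrDl.
rewrite big_split /=; congr (_ + _).
rewrite (bigD1_seq a) //= eqxx mulr1 big1 ?addr0 // => x /negbTE nx.
by rewrite eq_sym nx mulr0 mul0r.
Qed.

Lemma sum_coef_undup V (s : comb K V) (G : Key V -> K) :
  \sum_(q <- s) q.1 * G q.2 = \sum_(x <- undup (map snd s)) coef s x * G x.
Proof. by apply: sum_coef_pairing => [|y]; rewrite ?undup_uniq ?mem_undup. Qed.

Lemma sumr_neq0P (T : eqType) (r : seq T) (F : T -> K) :
  \sum_(i <- r) F i != 0 -> exists2 i, i \in r & F i != 0.
Proof.
move=> nz; apply/hasP; apply: contraR nz => /hasPn h.
by rewrite big1_seq // => i /h /negPn /eqP.
Qed.

(* [P] is a subspace of the free vector space, lists being identified when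
   their coefficient functions agree. *)
Definition lin_closed V (P : comb K V -> Prop) :=
  forall (L : seq (K * comb K V)) s, (forall q, q \in L -> P q.2) ->
    (forall k, coef s k = \sum_(q <- L) q.1 * coef q.2 k) -> P s.

Section LinClosed.
Variables (V : finType) (P : comb K V -> Prop).

Lemma lin_closed_intro :
  P [::] -> (forall s s', P s -> (forall k, coef s' k = coef s k) -> P s') ->
  (forall c s t, P s -> P t -> P ([seq (c * q.1, q.2) | q <- s] ++ t)) ->
  lin_closed P.
Proof.
move=> P0 Pcoef PD L s HL Hs; apply: (Pcoef (lincomb L)) => [|k]; last first.
  by rewrite Hs coef_lincomb.
elim: L HL {Hs} => [|[c r] L IH] HL //=; apply: PD; first by apply: (HL (c, r)); rewrite mem_head.
by apply: IH => q hq; apply: HL; rewrite inE hq orbT.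
Qed.

Hypothesis linP : lin_closed P.

Lemma lin_closed_nil : P [::].
Proof. by apply: (linP (L := [::])) => // k; rewrite coef_nil big_nil. Qed.

Lemma lin_closed_coef s s' : P s -> (forall k, coef s' k = coef s k) -> P s'.
Proof.
move=> Ps e; apply: (linP (L := [:: (1, s)])) => [q|k]; first by rewrite inE => /eqP->.
by rewrite big_seq1 mul1r.
Qed.

Lemma lin_closed2 c1 s1 c2 s2 s : P s1 -> P s2 ->
  (forall k, coef s k = c1 * coef s1 k + c2 * coef s2 k) -> P s.
Proof.
move=> h1 h2 hs; apply: (linP (L := [:: (c1, s1); (c2, s2)])).
  by move=> q; rewrite !inE => /orP[] /eqP->.
by move=> k; rewrite hs !big_cons big_nil addr0.
Qed.

Lemma lin_closed3 c1 s1 c2 s2 c3 s3 s : P s1 -> P s2 -> P s3 ->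
  (forall k, coef s k = c1 * coef s1 k + c2 * coef s2 k + c3 * coef s3 k) -> P s.
Proof.
move=> h1 h2 h3 hs; apply: (linP (L := [:: (c1, s1); (c2, s2); (c3, s3)])).
  by move=> q; rewrite !inE => /orP[/eqP->|/orP[] /eqP->].
by move=> k; rewrite hs !big_cons big_nil addr0 addrA.
Qed.

Variables (T : eqType) (r : seq T) (f : T -> comb K V).

Lemma lin_closed_sum c s : (forall i, i \in r -> P (f i)) ->
  (forall k, coef s k = c * \sum_(i <- r) coef (f i) k) -> P s.
Proof.
move=> Pf hs; apply: (linP (L := [seq (c, f i) | i <- r])) => [q /mapP[i hi ->]|k].
  exact: Pf.
by rewrite hs big_map mulr_sumr.
Qed.

Lemma lin_closed_sum1 c c1 s1 s : (forall i, i \in r -> P (f i)) -> P s1 ->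
  (forall k, coef s k = c * \sum_(i <- r) coef (f i) k + c1 * coef s1 k) -> P s.
Proof.
move=> Pf h1 hs; apply: (lin_closed2 (c1 := c) (s1 := lincomb [seq (1, f i) | i <- r]) _ h1).
  apply: (lin_closed_sum (c := 1)) => // k.
  by rewrite coef_lincomb big_map mul1r; under eq_bigr do rewrite mul1r.
by move=> k; rewrite hs coef_lincomb big_map; under [in RHS]eq_bigr do rewrite mul1r.
Qed.

Lemma lin_closed_sum2 c c1 s1 c2 s2 s :
  (forall i, i \in r -> P (f i)) -> P s1 -> P s2 ->
  (forall k, coef s k = c * \sum_(i <- r) coef (f i) k + c1 * coef s1 k + c2 * coef s2 k) ->
  P s.
Proof.
move=> Pf h1 h2 hs.
apply: (lin_closed3 (c1 := c) (s1 := lincomb [seq (1, f i) | i <- r]) _ h1 h2).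
  apply: (lin_closed_sum (c := 1)) => // k.
  by rewrite coef_lincomb big_map mul1r; under eq_bigr do rewrite mul1r.
by move=> k; rewrite hs coef_lincomb big_map; under [in RHS]eq_bigr do rewrite mul1r.
Qed.

End LinClosed.

Lemma in_rel_lin_closed V (m : V -> int) e : lin_closed (@in_rel K V m e).
Proof.
apply: lin_closed_intro.
- by exists [::]; split => // k; rewrite coef_nil big_nil.
- by move=> s s' [l [Hl Hs]] e'; exists l; split => // k; rewrite e'.
move=> c s t [l1 [H1 E1]] [l2 [H2 E2]].
exists ([seq (c * y.1, y.2) | y <- l1] ++ l2); split.
  by move=> q; rewrite mem_cat => /orP[/mapP[y hy ->]|hq] /=; [exact: H1|exact: H2].
move=> k; rewrite coef_cat coef_scale E1 E2 big_cat big_map mulr_sumr /=.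
by congr (_ + _); apply: eq_bigr => y _; rewrite mulrA.
Qed.

Lemma in_rel_basic V (m : V -> int) e (r : comb K V) : basic_rel m e r -> in_rel m e r.
Proof.
move=> hr; exists [:: (1, r)]; split => [q|k]; first by rewrite inE => /eqP->.
by rewrite big_seq1 mul1r.
Qed.

Section Extension.
Variables (W V : finType) (P : comb K V -> Prop) (g : Key W -> comb K V).
Hypothesis linP : lin_closed P.

Lemma lin_closed_extend z : (forall x, coef z x != 0 -> P (g x)) -> P (extend g z).
Proof.
move=> Hg.
pose supp := [seq x <- undup (map snd z) | coef z x != 0].
apply: (linP (L := [seq (coef z x, g x) | x <- supp])).
  by move=> q /mapP[x]; rewrite mem_filter => /andP[hx _] ->; apply: Hg.
move=> k; rewrite coef_extend big_map big_filter (sum_coef_undup z (fun x => coef (g x) k)).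
by rewrite [RHS]big_mkcond; apply: eq_bigr => x _; case: eqP => //= ->; rewrite mul0r.
Qed.

Lemma lin_closed_extend_rel (m : W -> int) e z :
  (forall r, basic_rel m e r -> P (extend g r)) -> in_rel m e z -> P (extend g z).
Proof.
move=> Hg [l [Hl1 Hl2]].
apply: (linP (L := [seq (q.1, extend g q.2) | q <- l])).
  by move=> q /mapP[y hy ->]; apply: Hg; apply: Hl1.
move=> k; rewrite coef_extend big_map.
set T := undup (map snd z ++ flatten [seq map snd q.2 | q <- l]).
have uT : uniq T by apply: undup_uniq.
rewrite (sum_coef_pairing (fun x => coef (g x) k) uT); last first.
  by move=> y hy; rewrite mem_undup mem_cat hy.
under [LHS]eq_bigr => x _ do rewrite Hl2 mulr_suml.
rewrite exchange_big /=; apply: eq_big_seq => q hq.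
rewrite coef_extend (sum_coef_pairing (fun x => coef (g x) k) uT).
  by rewrite mulr_sumr; apply: eq_bigr => x _; rewrite mulrA.
move=> y hy; rewrite mem_undup mem_cat; apply/orP; right.
case/mapP: hy => yy hyy ->; apply/allpairsPdep; exists q, yy; split => //; by case: yy hyy.
Qed.

End Extension.

End FormalCombinations.

Lemma eq_kapp (W : finType) (k : Key W) (x y : W -> int) :
  x =1 y -> kapp k x = kapp k y.
Proof. by move=> h; apply: eq_bigr => w _; rewrite h. Qed.

Lemma eq_lform (W : finType) m e (x y : W -> int) :
  x =1 y -> lform m e x x = lform m e y y.
Proof. by move=> h; apply: eq_bigr => a _; apply: eq_bigr => b _; rewrite !h. Qed.

Lemma pair_vv_sym (W : finType) (m : W -> int) e a b :
  symmetric e -> pair_vv m e a b = pair_vv m e b a.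
Proof. by move=> se; rewrite /pair_vv eq_sym; case: eqP => [->|_] //; rewrite se. Qed.

Lemma dvd2_sqr_sub (a : int) : (2 %| a * a - a)%Z.
Proof.
have r01 : (a %% 2)%Z = 0 \/ (a %% 2)%Z = 1.
  by have := @modz_ge0 a 2 erefl; have := @ltz_pmod a 2 erefl; lia.
rewrite (divz_eq a 2); set q := (a %/ 2)%Z.
by case: r01 => ->; apply/dvdzP; [exists (q * q * 2 - q) | exists (q * q * 2 + q)]; ring.
Qed.

Section Keys.
Variables (V : finType) (v : V).

Definition restrict (k : Key V) : Key (subv v) := [ffun w => k (val w)].

Lemma kshiftv (k : Key V) d : kshift v k d v = k v + d.
Proof. by rewrite ffunE eqxx. Qed.

Lemma kshift_ne (k : Key V) d u : u != v -> kshift v k d u = k u.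
Proof. by move=> hu; rewrite ffunE (negbTE hu). Qed.

Lemma kshift0 (k : Key V) : kshift v k 0 = k.
Proof. by apply/ffunP => w; rewrite ffunE; case: ifP => _; rewrite ?addr0. Qed.

Lemma kshiftD (k : Key V) a b : kshift v (kshift v k a) b = kshift v k (a + b).
Proof. by apply/ffunP => w; rewrite !ffunE; case: (w == v); rewrite ?addrA. Qed.

Lemma kextv (k : Key (subv v)) i : kext v k i v = i.
Proof. by rewrite ffunE insubF // eqxx. Qed.

Lemma kext_val (k : Key (subv v)) i w : kext v k i (val w) = k w.
Proof. by rewrite ffunE valK. Qed.

Lemma kext_restrict (k : Key V) i : kext v (restrict k) i = kshift v k (i - k v).
Proof.
apply/ffunP => w; rewrite !ffunE; case: insubP => [w' hw hv|].
  by rewrite ffunE hv (negbTE hw).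
by move/negbNE => /eqP->; rewrite eqxx addrC subrK.
Qed.

Lemma restrict_kext (k : Key (subv v)) i : restrict (kext v k i) = k.
Proof. by apply/ffunP => w; rewrite ffunE kext_val. Qed.

Lemma kshift_kext (k : Key (subv v)) i d : kshift v (kext v k i) d = kext v k (i + d).
Proof.
apply/ffunP => w; rewrite !ffunE; case: insubP => [w' hw _|]; first by rewrite (negbTE hw).
by move/negbNE => ->.
Qed.

Lemma restrict_kshift (k : Key V) d : restrict (kshift v k d) = restrict k.
Proof. by apply/ffunP => w; rewrite !ffunE (negbTE (valP w)). Qed.

Lemma sum_vertex_split (R : nmodType) (F : V -> R) :
  \sum_(w : V) F w = F v + \sum_(w : subv v) F (val w).
Proof.
rewrite (bigD1 v) //=; congr (_ + _).
rewrite (reindex_omap (val : subv v -> V) insub); last by move=> i hi; rewrite insubT.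
by apply: eq_bigl => w; rewrite valK eqxx andbT (valP w).
Qed.

Lemma pair_vv_del (m : V -> int) e (a b : subv v) :
  pair_vv (del_m m v) (del_e e v) a b = pair_vv m e (val a) (val b).
Proof. by []. Qed.

Lemma kapp_split (k : Key V) (x : V -> int) :
  kapp k x = k v * x v + kapp (restrict k) (fun w => x (val w)).
Proof.
by rewrite /kapp sum_vertex_split; congr (_ + _); apply: eq_bigr => w _; rewrite ffunE.
Qed.

Lemma kapp_kshift (k : Key V) d (x : V -> int) :
  kapp (kshift v k d) x = kapp k x + d * x v.
Proof. by rewrite !kapp_split restrict_kshift kshiftv; ring. Qed.

Lemma lform_split (m : V -> int) e (x : V -> int) :
  lform m e x x = x v * x v * m v
    + x v * \sum_(b : subv v) x (val b) * pair_vv m e v (val b)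
    + x v * \sum_(a : subv v) x (val a) * pair_vv m e (val a) v
    + lform (del_m m v) (del_e e v) (fun w => x (val w)) (fun w => x (val w)).
Proof.
have rowv : \sum_(b : V) x v * x b * pair_vv m e v b = x v * x v * m v
    + x v * \sum_(b : subv v) x (val b) * pair_vv m e v (val b).
  rewrite sum_vertex_split {1}/pair_vv eqxx mulr_sumr; congr (_ + _).
  by apply: eq_bigr => b _; ring.
have rows : \sum_(a : subv v) \sum_(b : V) x (val a) * x b * pair_vv m e (val a) b =
   x v * \sum_(a : subv v) x (val a) * pair_vv m e (val a) v
    + lform (del_m m v) (del_e e v) (fun w => x (val w)) (fun w => x (val w)).
  rewrite mulr_sumr /lform -big_split /=; apply: eq_bigr => a _.
  by rewrite sum_vertex_split; congr (_ + _); ring.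
by rewrite /lform sum_vertex_split rowv rows; ring.
Qed.

Lemma lform_reframe (m m' : V -> int) e (x : V -> int) :
  (forall w, w != v -> m' w = m w) ->
  lform m' e x x = lform m e x x + (m' v - m v) * x v * x v.
Proof.
move=> hm; rewrite !lform_split.
have hp a b : (a != v) || (b != v) -> pair_vv m' e a b = pair_vv m e a b.
  by rewrite /pair_vv; case: (eqVneq a b) => [<-|//]; rewrite orbb => /hm.
have -> : lform (del_m m' v) (del_e e v) (fun w => x (val w)) (fun w => x (val w))
  = lform (del_m m v) (del_e e v) (fun w => x (val w)) (fun w => x (val w)).
  by apply: eq_bigr => a _; apply: eq_bigr => b _; rewrite !pair_vv_del hp // (valP a).
rewrite (eq_bigr (fun b : subv v => x (val b) * pair_vv m e v (val b))); last first.
  by move=> b _; rewrite hp // (valP b) orbT.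
rewrite [X in _ + _ * X + _](eq_bigr (fun b : subv v => x (val b) * pair_vv m e (val b) v)).
  by ring.
by move=> b _; rewrite hp // (valP b).
Qed.

Lemma char_kshift (m m' : V -> int) e (k : Key V) d :
  (forall w, w != v -> m' w = m w) -> is_char m e k ->
  (2 %| d - (m' v - m v))%Z -> is_char m' e (kshift v k d).
Proof.
move=> hm hk hd x; rewrite kapp_kshift (lform_reframe e x hm).
have -> : kapp k x + d * x v - (lform m e x x + (m' v - m v) * x v * x v)
  = (kapp k x - lform m e x x) + (d - (m' v - m v)) * x v
    - (m' v - m v) * (x v * x v - x v) by ring.
apply: rpredB; first by apply: rpredD; [exact: hk | exact: dvdz_mulr].
exact/dvdz_mull/dvd2_sqr_sub.
Qed.

Lemma char_parity (m : V -> int) e (k : Key V) : is_char m e k -> (2 %| k v - m v)%Z.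
Proof.
move=> hk; have := hk (fun w => (w == v)%:Z).
have -> : kapp k (fun w => (w == v)%:Z) = k v.
  rewrite /kapp (bigD1 v) //= eqxx mulr1 big1 ?addr0 // => w /negbTE ->.
  by rewrite mulr0.
suff -> : lform m e (fun w => (w == v)%:Z) (fun w => (w == v)%:Z) = m v by [].
rewrite /lform (bigD1 v) //= [X in _ + X]big1; last first.
  by move=> a /negbTE ->; apply: big1 => b _; rewrite !mul0r.
rewrite addr0 (bigD1 v) //= eqxx /pair_vv eqxx big1 ?addr0 ?mul1r //.
by move=> b /negbTE ->; rewrite mulr0 mul0r.
Qed.

Lemma char_restrict (m : V -> int) e (k : Key V) :
  is_char m e k -> is_char (del_m m v) (del_e e v) (restrict k).
Proof.
move=> hk x'; pose x w : int := if insub w is Some w' then x' w' else 0.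
have xv : x v = 0 by rewrite /x insubF // eqxx.
have xw : (fun w => x (val w)) =1 x' by move=> w; rewrite /x valK.
have := hk x; rewrite kapp_split lform_split xv (eq_kapp _ xw) (eq_lform _ _ xw).
by rewrite !mul0r !mulr0 !add0r.
Qed.

Lemma char_kext (m : V -> int) e (k : Key (subv v)) i : symmetric e ->
  is_char (del_m m v) (del_e e v) k -> (2 %| i - m v)%Z -> is_char m e (kext v k i).
Proof.
move=> se hk hi x; rewrite kapp_split lform_split kextv restrict_kext.
set S1 := \sum_(b : subv v) _; set S2 := \sum_(b : subv v) _.
have -> : S2 = S1 by apply: eq_bigr => b _; rewrite pair_vv_sym.
set y := fun w : subv v => x (val w).
have -> : i * x v + kapp k y
    - (x v * x v * m v + x v * S1 + x v * S1 + lform (del_m m v) (del_e e v) y y)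
  = (kapp k y - lform (del_m m v) (del_e e v) y y) + (i - m v) * x v
    - (m v * (x v * x v - x v) + (x v * S1) * 2) by ring.
apply: rpredB; first by apply: rpredD; [exact: hk | exact: dvdz_mulr].
by apply: rpredD; apply: dvdz_mull; [exact: dvd2_sqr_sub | exact: dvdzz].
Qed.

End Keys.

Section Reflections.
Variables (V : finType) (m : V -> int) (e : rel V).

Definition ksub (u : V) (k : Key V) : Key V := [ffun w => k w - 2 * dualv m e u w].
Definition kadd (u : V) (k : Key V) : Key V := [ffun w => k w + 2 * dualv m e u w].

Lemma ksubE u k w : ksub u k w = k w - 2 * pair_vv m e u w.
Proof. by rewrite !ffunE. Qed.

Lemma kaddE u k w : kadd u k w = k w + 2 * pair_vv m e u w.
Proof. by rewrite !ffunE. Qed.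

Lemma kapp_dual_shift (k : Key V) u c x :
  kapp [ffun w => k w + c * dualv m e u w] x = kapp k x + c * kapp (dualv m e u) x.
Proof.
by rewrite /kapp mulr_sumr -big_split /=; apply: eq_bigr => w _; rewrite ffunE; ring.
Qed.

Lemma char_dual_shift (k : Key V) u c : is_char m e k -> (2 %| c)%Z ->
  is_char m e [ffun w => k w + c * dualv m e u w].
Proof.
move=> hk hc x; rewrite kapp_dual_shift.
have -> : kapp k x + c * kapp (dualv m e u) x - lform m e x x
  = (kapp k x - lform m e x x) + c * kapp (dualv m e u) x by ring.
by apply: rpredD; [exact: hk | exact: dvdz_mulr].
Qed.

Lemma char_ksub u k : is_char m e k -> is_char m e (ksub u k).
Proof.
move=> hk; have -> : ksub u k = [ffun w => k w + (-2) * dualv m e u w].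
  by apply/ffunP => w; rewrite !ffunE mulNr.
exact: char_dual_shift.
Qed.

Lemma char_kadd u k : is_char m e k -> is_char m e (kadd u k).
Proof. by move=> hk; apply: char_dual_shift. Qed.

Variable K : fieldType.

Lemma in_rel_I (k : Key V) u : is_char m e k -> - m u < `|k u| ->
  @in_rel K V m e [:: (1, k)].
Proof. by move=> hk hu; apply: in_rel_basic; exists k, u; split => //; left. Qed.

Lemma in_rel_IIsub (k : Key V) u : is_char m e k -> k u = m u ->
  @in_rel K V m e [:: (1, k); (- (-1) ^ m u, ksub u k)].
Proof. by move=> hk hu; apply: in_rel_basic; exists k, u; split => //; right; left. Qed.

Lemma in_rel_IIadd (k : Key V) u : is_char m e k -> k u = - m u ->
  @in_rel K V m e [:: (1, k); (- (-1) ^ m u, kadd u k)].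
Proof. by move=> hk hu; apply: in_rel_basic; exists k, u; split => //; right; right. Qed.

End Reflections.

Arguments in_rel_I {V m e K k u}.
Arguments in_rel_IIsub {V m e K k u}.
Arguments in_rel_IIadd {V m e K k u}.

Section Exactness.
Variables (K : fieldType) (V : finType) (m : V -> int) (e : rel V) (v : V) (p : nat).
Hypotheses (se : symmetric e) (mv : m v = - p%:Z) (p_gt0 : (0 < p)%N).
Hypothesis two_neq0 : (2 : K) != 0.

Local Notation m1 := (plus1_m m v p).

Let in_rel_m_lin := @in_rel_lin_closed K V m e.
Let in_rel_m1_lin := @in_rel_lin_closed K V m1 e.

Lemma m1_v : m1 v = - p%:Z + 1.
Proof. by rewrite /plus1_m eqxx. Qed.

Lemma m1_vS : m1 v = m v + 1.
Proof. by rewrite m1_v mv. Qed.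

Lemma m1_ne w : w != v -> m1 w = m w.
Proof. by rewrite /plus1_m => /negbTE ->. Qed.

Lemma pair_vv_m1 a b : pair_vv m1 e a b = pair_vv m e a b + ((a == v) && (b == v))%:Z.
Proof.
rewrite /pair_vv; case: (eqVneq a b) => [<-|nab].
  by case: (eqVneq a v) => [->|nav] /=; rewrite ?m1_vS // m1_ne // addr0.
have /negbTE -> : ~~ ((a == v) && (b == v)).
  by apply/negP => /andP[/eqP ha /eqP hb]; move: nab; rewrite ha hb eqxx.
by rewrite addr0.
Qed.

Lemma ksub_kshift mm u (k : Key V) d :
  ksub mm e u (kshift v k d) = kshift v (ksub mm e u k) d.
Proof. by apply/ffunP => w; rewrite !ffunE; case: ifP => _; ring. Qed.

Lemma kadd_kshift mm u (k : Key V) d :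
  kadd mm e u (kshift v k d) = kshift v (kadd mm e u k) d.
Proof. by apply/ffunP => w; rewrite !ffunE; case: ifP => _; ring. Qed.

Lemma ksub_m1_ne u (k : Key V) : u != v -> ksub m1 e u k = ksub m e u k.
Proof. by move=> hu; apply/ffunP => w; rewrite !ffunE pair_vv_m1 (negbTE hu) addr0. Qed.

Lemma kadd_m1_ne u (k : Key V) : u != v -> kadd m1 e u k = kadd m e u k.
Proof. by move=> hu; apply/ffunP => w; rewrite !ffunE pair_vv_m1 (negbTE hu) addr0. Qed.

Lemma ksub_m1_v (k : Key V) : ksub m1 e v k = kshift v (ksub m e v k) (-2).
Proof. by apply/ffunP => w; rewrite !ffunE pair_vv_m1 eqxx /=; case: (w == v) => /=; ring. Qed.

Lemma kadd_m1_v (k : Key V) : kadd m1 e v k = kshift v (kadd m e v k) 2.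
Proof. by apply/ffunP => w; rewrite !ffunE pair_vv_m1 eqxx /=; case: (w == v) => /=; ring. Qed.

Lemma char_to_m1 (k : Key V) d :
  is_char m e k -> (2 %| d - 1)%Z -> is_char m1 e (kshift v k d).
Proof.
move=> hk hd; apply: char_kshift hk _; first exact: m1_ne.
by rewrite m1_vS addrAC subrr add0r.
Qed.

Lemma char_from_m1 (k : Key V) d :
  is_char m1 e k -> (2 %| d + 1)%Z -> is_char m e (kshift v k d).
Proof.
move=> hk hd; apply: char_kshift hk _; first by move=> w /m1_ne ->.
by have -> : m v - m1 v = -1 by rewrite m1_vS; ring.
Qed.

Lemma char_m1_even (k : Key V) d :
  is_char m1 e k -> (2 %| d)%Z -> is_char m1 e (kshift v k d).
Proof. by move=> hk hd; apply: char_kshift hk _; rewrite ?subrr ?subr0. Qed.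

Lemma char_to_m1_unit (k : Key V) d :
  is_char m e k -> `|d| = 1 -> is_char m1 e (kshift v k d).
Proof. by move=> hk hd; apply: char_to_m1 => //; have [->|->] : d = 1 \/ d = -1 by lia. Qed.

Lemma char_from_m1_odd (k : Key V) (l : nat) :
  is_char m1 e k -> is_char m e (kshift v k (1 + 2 * l%:Z)).
Proof. by move=> hk; apply: char_from_m1 => //; apply/dvdzP; exists (1 + l%:Z); ring. Qed.

Lemma sign_S (z : int) : (-1 : K) ^ (z + 1) = - (-1) ^ z.
Proof. by rewrite expfzDr ?oppr_eq0 ?oner_eq0 // expr1z mulrN1. Qed.

Definition genA (k' : Key (subv v)) : comb K V := [seq (1, kext v k' i) | i <- Arange p].

Definition genB (k : Key V) : comb K V :=
  [:: (- (1 / 2), kshift v k 1); (1 / 2, kshift v k (-1))].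

(* The least [n] with [j + 2 n > p], for [j] of the parity of [p + 1]. *)
Definition lenC (j : int) : nat := if j < p%:Z then (absz (p%:Z - j + 1))./2 else 0.

Definition genC (k : Key V) : comb K V :=
  [seq (2, kshift v k (1 + 2 * l%:Z)) | l <- index_iota 0 (lenC (k v))].

Definition in_imA (s : comb K V) : Prop := exists t : comb K (subv v),
  in_free (del_m m v) (del_e e v) t /\ in_rel m e (csub s (mapA v p t)).

Lemma sum_genA k' (G : Key V -> K) :
  \sum_(q <- genA k') q.1 * G q.2 = \sum_(0 <= j < p.+1) G (kext v k' (- p%:Z + 2 * j%:Z)).
Proof. by rewrite !big_map /index_iota subn0; apply: eq_bigr => j _; rewrite mul1r. Qed.

Lemma coef_genA k' x :
  coef (genA k') x = \sum_(0 <= j < p.+1) (kext v k' (- p%:Z + 2 * j%:Z) == x)%:R.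
Proof. by rewrite coef_combE (sum_genA _ (fun y => (y == x)%:R)). Qed.

Lemma coef_genB k x :
  coef (genB k) x = - (1 / 2) * (kshift v k 1 == x)%:R + 1 / 2 * (kshift v k (-1) == x)%:R.
Proof. by rewrite !coef_consE coef_nil addr0. Qed.

Lemma coef_extend_genB (g : Key V -> comb K V) k x :
  coef (extend g (genB k)) x =
    - (1 / 2) * coef (g (kshift v k 1)) x + 1 / 2 * coef (g (kshift v k (-1))) x.
Proof. by rewrite coef_extend !big_cons big_nil addr0. Qed.

Lemma coef_genC k x :
  coef (genC k) x = 2 * \sum_(0 <= l < lenC (k v)) (kshift v k (1 + 2 * l%:Z) == x)%:R.
Proof. by rewrite coef_pairs mulr_sumr. Qed.

Lemma sum_mapA t (G : Key V -> K) :
  \sum_(q <- mapA v p t) q.1 * G q.2 = \sum_(q <- t) q.1 * \sum_(y <- genA q.2) y.1 * G y.2.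
Proof.
rewrite big_flatten big_map; apply: eq_bigr => q _.
by rewrite !big_map mulr_sumr; apply: eq_bigr => y _; rewrite mul1r.
Qed.

Lemma sum_mapB s (G : Key V -> K) :
  \sum_(q <- mapB v s) q.1 * G q.2 = \sum_(q <- s) q.1 * \sum_(y <- genB q.2) y.1 * G y.2.
Proof.
rewrite big_flatten big_map; apply: eq_bigr => q _.
by rewrite !big_cons !big_nil /=; ring.
Qed.

Lemma coef_mapA t x : coef (mapA v p t) x = \sum_(q <- t) q.1 * coef (genA q.2) x.
Proof.
rewrite coef_combE (sum_mapA _ (fun y => (y == x)%:R)).
by apply: eq_bigr => q _; rewrite coef_combE.
Qed.

Lemma coef_mapB s x : coef (mapB v s) x = \sum_(q <- s) q.1 * coef (genB q.2) x.
Proof.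
rewrite coef_combE (sum_mapB _ (fun y => (y == x)%:R)).
by apply: eq_bigr => q _; rewrite coef_combE.
Qed.

Lemma in_imA_lin_closed : lin_closed in_imA.
Proof.
apply: lin_closed_intro.
- by exists [::]; split; [move=> k; rewrite coef_nil eqxx | exact: lin_closed_nil].
- move=> s s' [t [ht hr]] hs'; exists t; split => //.
  by apply: (lin_closed_coef in_rel_m_lin hr) => k; rewrite !coef_csub hs'.
move=> c s s' [t [ht hr]] [t' [ht' hr']].
exists ([seq (c * q.1, q.2) | q <- t] ++ t'); split.
  move=> k; rewrite coef_cat coef_scale.
  by case: (eqVneq (coef t k) 0) => [->|/ht //]; rewrite mulr0 add0r => /ht'.
apply: (lin_closed2 (c1 := c) (c2 := 1) in_rel_m_lin hr hr') => k.
rewrite !coef_csub !coef_cat coef_scale !coef_mapA big_cat big_map /=.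
rewrite (eq_bigr (fun q => c * (q.1 * coef (genA q.2) k))) => [|q _]; last by rewrite mulrA.
by rewrite -mulr_sumr; ring.
Qed.

Lemma in_imA_rel s : in_rel m e s -> in_imA s.
Proof.
move=> hs; exists [::]; split; first by move=> k; rewrite coef_nil eqxx.
apply: (lin_closed_coef in_rel_m_lin hs) => k.
by rewrite coef_csub coef_mapA big_nil subr0.
Qed.

Lemma in_imA_genA k' : is_char (del_m m v) (del_e e v) k' -> in_imA (genA k').
Proof.
move=> hk; exists [:: (1, k')]; split.
  by move=> x; rewrite coef_seq1; case: (eqVneq k' x) => [<-|_]; rewrite ?eqxx.
apply: (lin_closed_coef in_rel_m_lin (lin_closed_nil in_rel_m_lin)) => x.
by rewrite coef_csub coef_mapA big_seq1 mul1r subrr coef_nil.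
Qed.

Lemma genB_single k :
  (forall d, `|d| = 1 -> in_rel m1 e [:: (1 : K, kshift v k d)]) ->
  in_rel m1 e (extend genB [:: (1, k)]).
Proof.
move=> h.
apply: (lin_closed2 (c1 := - (1 / 2)) (c2 := 1 / 2) in_rel_m1_lin (h 1 erefl) (h (-1) erefl)).
by move=> x; rewrite coef_extend1 coef_genB !coef_seq1.
Qed.

Lemma genB_pair k c k' :
  (forall d, `|d| = 1 -> in_rel m1 e [:: (1 : K, kshift v k d); (c, kshift v k' d)]) ->
  in_rel m1 e (extend genB [:: (1, k); (c, k')]).
Proof.
move=> h.
apply: (lin_closed2 (c1 := - (1 / 2)) (c2 := 1 / 2) in_rel_m1_lin (h 1 erefl) (h (-1) erefl)).
by move=> x; rewrite coef_extend2 !coef_genB !coef_seq2; ring.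
Qed.

Lemma genB_relI k u : is_char m e k -> - m u < `|k u| ->
  in_rel m1 e (extend genB [:: (1, k)]).
Proof.
move=> hk hu; apply: genB_single => d hd.
apply: (in_rel_I (u := u)); first exact: char_to_m1_unit.
case: (eqVneq u v) hu => [->|huv] hu; last by rewrite kshift_ne // m1_ne.
by rewrite kshiftv m1_v; rewrite mv in hu; lia.
Qed.

Lemma genB_relIIsub_ne k u : u != v -> is_char m e k -> k u = m u ->
  in_rel m1 e (extend genB [:: (1, k); (- (-1) ^ m u, ksub m e u k)]).
Proof.
move=> huv hk hu; apply: genB_pair => d hd.
have := in_rel_IIsub (u := u) (char_to_m1_unit hk hd).
by rewrite ksub_m1_ne // ksub_kshift m1_ne // kshift_ne //; apply.
Qed.

Lemma genB_relIIadd_ne k u : u != v -> is_char m e k -> k u = - m u ->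
  in_rel m1 e (extend genB [:: (1, k); (- (-1) ^ m u, kadd m e u k)]).
Proof.
move=> huv hk hu; apply: genB_pair => d hd.
have := in_rel_IIadd (u := u) (char_to_m1_unit hk hd).
by rewrite kadd_m1_ne // kadd_kshift m1_ne // kshift_ne //; apply.
Qed.

Lemma genB_relIIsub_v k : is_char m e k -> k v = m v ->
  in_rel m1 e (extend genB [:: (1, k); (- (-1) ^ m v, ksub m e v k)]).
Proof.
move=> hk hkv.
have hK : is_char m1 e (kshift v (ksub m e v k) 1) by apply: char_to_m1; first exact: char_ksub.
have R := in_rel_IIsub (K := K) (u := v) (char_to_m1_unit (d := 1) hk erefl).
rewrite ksub_kshift ksub_m1_v kshiftD kshiftv hkv m1_vS in R.
apply: (lin_closed3 (c1 := - (1 / 2)) (c2 := 1 / 2) (c3 := 1 / 2 * (-1) ^ m v)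
         in_rel_m1_lin (R erefl)
         (s2 := [:: (1, kshift v k (-1))]) (s3 := [:: (1, kshift v (ksub m e v k) 1)])).
- apply: (in_rel_I (u := v)); first exact: char_to_m1_unit.
  by rewrite kshiftv m1_v hkv mv; lia.
- apply: (in_rel_I (u := v) hK).
  by rewrite kshiftv ksubE /pair_vv eqxx m1_v hkv mv; lia.
by move=> x; rewrite coef_extend2 !coef_genB !coef_seq1 coef_seq2 sign_S; ring.
Qed.

Lemma genB_relIIadd_v k : is_char m e k -> k v = - m v ->
  in_rel m1 e (extend genB [:: (1, k); (- (-1) ^ m v, kadd m e v k)]).
Proof.
move=> hk hkv.
have hK : is_char m1 e (kshift v (kadd m e v k) (-1)) by apply: char_to_m1; first exact: char_kadd.
have R := in_rel_IIadd (K := K) (u := v) (char_to_m1_unit (d := -1) hk erefl).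
rewrite kadd_kshift kadd_m1_v kshiftD kshiftv hkv m1_vS in R.
have hR : - m v - 1 = - (m v + 1) by ring.
apply: (lin_closed3 (c1 := - (1 / 2)) (c2 := 1 / 2) (c3 := - (1 / 2) * (-1) ^ m v)
         in_rel_m1_lin _ (R hR)
         (s1 := [:: (1, kshift v k 1)]) (s3 := [:: (1, kshift v (kadd m e v k) (-1))])).
- apply: (in_rel_I (u := v)); first exact: char_to_m1_unit.
  by rewrite kshiftv m1_v hkv mv; lia.
- apply: (in_rel_I (u := v) hK).
  by rewrite kshiftv kaddE /pair_vv eqxx m1_v hkv mv; lia.
by move=> x; rewrite coef_extend2 !coef_genB !coef_seq1 coef_seq2 sign_S; ring.
Qed.

Lemma genB_rel r : basic_rel m e r -> in_rel m1 e (extend genB r).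
Proof.
case=> k [u [hk [[hu ->]|[[hu ->]|[hu ->]]]]]; first exact: genB_relI hu.
- by case: (eqVneq u v) hu => [->|huv] hu; [exact: genB_relIIsub_v | exact: genB_relIIsub_ne].
- by case: (eqVneq u v) hu => [->|huv] hu; [exact: genB_relIIadd_v | exact: genB_relIIadd_ne].
Qed.

Lemma genB_genA k' : is_char (del_m m v) (del_e e v) k' -> in_rel m1 e (extend genB (genA k')).
Proof.
move=> hk; have hkext i : (2 %| i + p%:Z)%Z -> is_char m e (kext v k' i).
  by move=> hi; apply: char_kext => //; rewrite mv opprK.
have lo : is_char m1 e (kext v k' (- p%:Z - 1)).
  by rewrite -kshift_kext; apply: char_to_m1 => //; apply: hkext; rewrite addNr.
have hi : is_char m1 e (kext v k' (p%:Z + 1)).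
  rewrite -kshift_kext; apply: char_to_m1; last by rewrite subrr.
  by apply: hkext; apply/dvdzP; exists p%:Z; ring.
have lo_v : - m1 v < `|kext v k' (- p%:Z - 1) v| by rewrite kextv m1_v; lia.
have hi_v : - m1 v < `|kext v k' (p%:Z + 1) v| by rewrite kextv m1_v; lia.
apply: (lin_closed2 (c1 := 1 / 2) (c2 := - (1 / 2)) in_rel_m1_lin
  (in_rel_I lo lo_v) (in_rel_I hi hi_v)).
move=> x; rewrite coef_extend (sum_genA _ (fun y => coef (genB y) x)) !coef_seq1.
pose f j := (kext v k' (- p%:Z - 1 + 2 * j%:Z) == x)%:R : K.
rewrite (eq_bigr (fun j => - (1 / 2) * (f j.+1 - f j))) => [|j _]; last first.
  rewrite coef_genB !kshift_kext /f.
  rewrite (_ : - p%:Z + 2 * j%:Z + 1 = - p%:Z - 1 + 2 * j.+1%:Z); last by lia.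
  by rewrite (_ : - p%:Z + 2 * j%:Z + -1 = - p%:Z - 1 + 2 * j%:Z); [ring | lia].
rewrite -mulr_sumr telescope_sumr // /f.
rewrite (_ : - p%:Z - 1 + 2 * 0%:Z = - p%:Z - 1); last by lia.
by rewrite (_ : - p%:Z - 1 + 2 * p.+1%:Z = p%:Z + 1); [ring | lia].
Qed.

Lemma lenC_ge j : p%:Z <= j -> lenC j = 0%N.
Proof. by rewrite /lenC ltNge => ->. Qed.

Lemma lenC_eq j q : j = p%:Z + 1 - 2 * q%:Z -> lenC j = q.
Proof.
case: q => [|q] ->; first by rewrite lenC_ge //; lia.
rewrite /lenC ifT; last by lia.
by rewrite (_ : absz _ = q.+1.*2) ?doubleK //; lia.
Qed.

Lemma lenC_bound j : p%:Z <= j + 2 * (lenC j)%:Z.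
Proof.
rewrite /lenC; case: ifP => h; last by lia.
by have := odd_double_half (absz (p%:Z - j + 1)); have := leq_b1 (odd (absz (p%:Z - j + 1))); lia.
Qed.

Lemma genB_genC k : is_char m1 e k -> in_rel m1 e (csub [:: (1, k)] (extend genB (genC k))).
Proof.
move=> hk; set n := lenC (k v).
have hkn : is_char m1 e (kshift v k (2 * n%:Z)).
  by apply: char_m1_even => //; apply/dvdzP; exists n%:Z; ring.
apply: (lin_closed_coef in_rel_m1_lin (in_rel_I (u := v) hkn _)).
  by rewrite kshiftv m1_v; have := lenC_bound (k v); lia.
move=> x; rewrite coef_csub coef_extend big_map !coef_seq1.
pose g l := (kshift v k (2 * l%:Z) == x)%:R : K.
rewrite (eq_bigr (fun l => - (g l.+1 - g l))) => [|l _]; last first.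
  rewrite /= coef_genB !kshiftD /g.
  rewrite (_ : 1 + 2 * l%:Z + 1 = 2 * l.+1%:Z); last by lia.
  by rewrite (_ : 1 + 2 * l%:Z + -1 = 2 * l%:Z); [field | lia].
by rewrite sumrN telescope_sumr // /g mulr0 kshift0; ring.
Qed.

Lemma genC_genB k : is_char m e k -> in_imA (csub [:: (1, k)] (extend genC (genB k))).
Proof.
move=> hk; have LP := in_imA_lin_closed.
case/dvdzP: (char_parity v hk) => z hz.
case: (ltP p%:Z (k v)) => hkv.
  apply: (lin_closed_coef LP (in_imA_rel (in_rel_I (u := v) hk _))); first by rewrite mv; lia.
  move=> x; rewrite coef_csub coef_extend_genB !coef_genC !kshiftv.
  by rewrite !lenC_ge ?big_geq ?coef_seq1; [ring | lia..].
have [q hq] : exists q : nat, k v = p%:Z - 2 * q%:Z.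
  by exists (absz (p%:Z - z)); rewrite mv in hz; lia.
apply: (lin_closed_coef LP (lin_closed_nil LP)) => x.
rewrite coef_csub coef_extend_genB !coef_genC !kshiftv coef_seq1 coef_nil.
rewrite (@lenC_eq _ q); last by lia.
rewrite (@lenC_eq _ q.+1) ?big_nat_recl //; last by lia.
rewrite kshiftD (_ : -1 + (1 + 2 * 0%:Z) = 0) ?kshift0 //.
under [X in _ - (_ + _ * (_ * (_ + X)))]eq_bigr => l _.
  rewrite kshiftD (_ : -1 + (1 + 2 * l.+1%:Z) = 1 + (1 + 2 * l%:Z)); last by lia.
  rewrite -kshiftD; over.
by field.
Qed.

Lemma in_rel_IIsub_kshift k u (l : nat) : u != v -> is_char m1 e k -> k u = m u ->
  in_rel m e [:: (1 : K, kshift v k (1 + 2 * l%:Z));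
                 (- (-1) ^ m u, kshift v (ksub m e u k) (1 + 2 * l%:Z))].
Proof.
move=> huv hk hu; rewrite -ksub_kshift.
by apply: in_rel_IIsub; [exact: char_from_m1_odd | rewrite kshift_ne].
Qed.

Lemma in_rel_IIadd_kshift k u (l : nat) : u != v -> is_char m1 e k -> k u = - m u ->
  in_rel m e [:: (1 : K, kshift v k (1 + 2 * l%:Z));
                 (- (-1) ^ m u, kshift v (kadd m e u k) (1 + 2 * l%:Z))].
Proof.
move=> huv hk hu; rewrite -kadd_kshift.
by apply: in_rel_IIadd; [exact: char_from_m1_odd | rewrite kshift_ne].
Qed.

Lemma genC_single k :
  (forall l : nat, in_rel m e [:: (1 : K, kshift v k (1 + 2 * l%:Z))]) ->
  in_imA (extend genC [:: (1, k)]).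
Proof.
move=> h; apply: (lin_closed_sum (r := index_iota 0 (lenC (k v))) (c := 2)
  (f := fun l : nat => [:: (1, kshift v k (1 + 2 * l%:Z))]) in_imA_lin_closed).
  by move=> l _; apply: in_imA_rel; apply: h.
move=> x; rewrite coef_extend1 coef_genC; congr (_ * _).
by apply: eq_bigr => l _; rewrite coef_seq1.
Qed.

Lemma genC_pair_aligned (k : Key V) (c : K) (k' : Key V) : k' v = k v ->
  (forall l : nat,
     in_rel m e [:: (1, kshift v k (1 + 2 * l%:Z)); (c, kshift v k' (1 + 2 * l%:Z))]) ->
  in_imA (extend genC [:: (1, k); (c, k')]).
Proof.
move=> hv h; apply: (lin_closed_sum (r := index_iota 0 (lenC (k v))) (c := 2)
  (f := fun l : nat => [:: (1, kshift v k (1 + 2 * l%:Z)); (c, kshift v k' (1 + 2 * l%:Z))])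
  in_imA_lin_closed).
  by move=> l _; apply: in_imA_rel; apply: h.
move=> x; rewrite coef_extend2 !coef_genC hv; under [in RHS]eq_bigr do rewrite coef_seq2.
by rewrite big_split /= -mulr_sumr; ring.
Qed.

Lemma genC_relI k u : is_char m1 e k -> - m1 u < `|k u| -> in_imA (extend genC [:: (1, k)]).
Proof.
move=> hk hu; have LP := in_imA_lin_closed.
have hkl l := char_from_m1_odd l hk.
case: (eqVneq u v) hu => [->|huv] hu; last first.
  by apply: genC_single => l; apply: (in_rel_I (u := u) (hkl l)); rewrite kshift_ne // -m1_ne.
case/dvdzP: (char_parity v hk) => z hz; rewrite m1_v in hz hu.
case: (lerP p%:Z (k v)) => hkv.
  apply: (lin_closed_coef LP (lin_closed_nil LP)) => x.
  by rewrite coef_extend1 coef_genC lenC_ge // big_geq // mulr0 coef_nil.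
have [a ha] : exists a : nat, k v = - p%:Z - 1 - 2 * a%:Z by exists (absz (- z - 1)); lia.
apply: (lin_closed_sum1 (r := index_iota 0 a) (c := 2)
  (f := fun l => [:: (1, kshift v k (1 + 2 * l%:Z))]) (c1 := 2) (s1 := genA (restrict v k)) LP).
- move=> l; rewrite mem_index_iota => /andP[_ hl]; apply: in_imA_rel.
  by apply: (in_rel_I (u := v) (hkl l)); rewrite kshiftv mv; lia.
- apply: in_imA_genA; rewrite -(restrict_kshift v k 1); apply: char_restrict.
  by apply: char_from_m1.
move=> x; rewrite coef_extend1 coef_genC (@lenC_eq _ (a + p.+1)); last by lia.
rewrite [in LHS](@big_cat_nat _ _ _ a) ?leq_addr //= coef_genA.
rewrite mulrDr; congr (_ + _); first by congr (_ * _); apply: eq_bigr => l _; rewrite coef_seq1.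
rewrite -{1}[a]add0n big_addn addnC addnK; congr (_ * _); apply: eq_bigr => j _.
by rewrite kext_restrict; congr ((kshift v k _ == x)%:R); lia.
Qed.

Lemma genC_relIIsub_v k : is_char m1 e k -> k v = m1 v ->
  in_imA (extend genC [:: (1, k); (- (-1) ^ m1 v, ksub m1 e v k)]).
Proof.
move=> hk hkv; rewrite m1_v in hkv.
have hKv : ksub m1 e v k v = p%:Z - 1 by rewrite ksubE /pair_vv eqxx hkv m1_v; ring.
have hk1 : is_char m e (kshift v k (-1)) by apply: char_from_m1.
have hk1v : kshift v k (-1) v = m v by rewrite kshiftv hkv mv; ring.
have R := in_rel_IIsub (K := K) hk1 hk1v; rewrite ksub_kshift in R.
have hA : in_imA (genA (restrict v k)).
  by apply: in_imA_genA; rewrite -(restrict_kshift v k (-1)); apply: char_restrict.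
apply: (lin_closed2 (c1 := 2) (c2 := -2) in_imA_lin_closed hA (in_imA_rel R)).
move=> x; rewrite coef_extend2 !coef_genC hKv (@lenC_eq (p%:Z - 1) 1); last by lia.
rewrite (@lenC_eq (k v) p) ?big_nat1; last by lia.
rewrite coef_genA big_nat_recl // coef_seq2.
rewrite ksub_m1_v kshiftD (_ : -2 + (1 + 2 * 0%:Z) = -1) //.
rewrite kext_restrict (_ : - p%:Z + 2 * 0%:Z - k v = -1); last by lia.
under [X in _ = 2 * (_ + X) + _]eq_bigr => l _.
  by rewrite kext_restrict (_ : - p%:Z + 2 * l.+1%:Z - k v = 1 + 2 * l%:Z); [over | lia].
by rewrite m1_vS sign_S; ring.
Qed.

Lemma genC_relIIadd_v k : is_char m1 e k -> k v = - m1 v ->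
  in_imA (extend genC [:: (1, k); (- (-1) ^ m1 v, kadd m1 e v k)]).
Proof.
move=> hk hkv; have {}hkv : k v = p%:Z - 1 by rewrite hkv m1_v; ring.
set K' := kadd m1 e v k.
have hKv : K' v = - p%:Z + 1 by rewrite kaddE /pair_vv eqxx hkv m1_v; ring.
have hk1 : is_char m e (kshift v k 1) by apply: char_from_m1.
have hk1v : kshift v k 1 v = - m v by rewrite kshiftv hkv mv; ring.
have R := in_rel_IIadd (K := K) hk1 hk1v.
rewrite kadd_kshift (_ : kshift v (kadd m e v k) 1 = kshift v K' (-1)) in R; last first.
  by rewrite /K' kadd_m1_v kshiftD.
have hA : in_imA (genA (restrict v K')).
  apply: in_imA_genA; rewrite -(restrict_kshift v K' (-1)); apply: char_restrict.
  by apply: char_from_m1 => //; apply: char_kadd.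
apply: (lin_closed2 (c1 := 2) (c2 := 2 * (-1) ^ m v) in_imA_lin_closed (in_imA_rel R) hA).
move=> x; rewrite coef_extend2 !coef_genC hKv hkv (@lenC_eq (p%:Z - 1) 1); last by lia.
rewrite (@lenC_eq (- p%:Z + 1) p) ?big_nat1; last by lia.
rewrite coef_genA big_nat_recl // coef_seq2.
rewrite kext_restrict hKv (_ : - p%:Z + 2 * 0%:Z - (- p%:Z + 1) = -1); last by lia.
under [X in _ = _ + _ * (_ + X)]eq_bigr => l _.
  rewrite kext_restrict hKv.
  by rewrite (_ : - p%:Z + 2 * l.+1%:Z - (- p%:Z + 1) = 1 + 2 * l%:Z); [over | lia].
by rewrite m1_vS sign_S; ring.
Qed.

Lemma genC_relIIsub_adj k u : u != v -> e u v -> is_char m1 e k -> k u = m u ->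
  in_imA (extend genC [:: (1, k); (- (-1) ^ m u, ksub m e u k)]).
Proof.
move=> huv he hk hu; have LP := in_imA_lin_closed; set c : K := - (-1) ^ m u.
have hKv : ksub m e u k v = k v + 2 by rewrite ksubE /pair_vv (negbTE huv) he; ring.
case/dvdzP: (char_parity v hk) => z hz; rewrite m1_v in hz.
case: (lerP p%:Z (k v)) => hkv.
  apply: (lin_closed_coef LP (lin_closed_nil LP)) => x.
  by rewrite coef_extend2 !coef_genC hKv !lenC_ge ?big_geq ?coef_nil; [ring | lia..].
have [q hq] : exists q : nat, k v = p%:Z - 1 - 2 * q%:Z by exists (absz (p%:Z - 1 - z)%R); lia.
set T := kshift v (ksub m e u k) (1 + 2 * q%:Z).
have hT : is_char m e T.
  by apply: char_from_m1_odd; rewrite -ksub_m1_ne //; apply: char_ksub.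
apply: (lin_closed_sum1 (r := index_iota 0 q.+1) (c := 2)
  (f := fun l : nat =>
     [:: (1, kshift v k (1 + 2 * l%:Z)); (c, kshift v (ksub m e u k) (1 + 2 * l%:Z))])
  (c1 := - 2 * c) (s1 := [:: (1, T)]) LP).
- by move=> l _; apply/in_imA_rel/in_rel_IIsub_kshift.
- by apply: in_imA_rel; apply: (in_rel_I (u := v) hT); rewrite kshiftv hKv mv; lia.
move=> x; rewrite coef_extend2 !coef_genC hKv.
rewrite (@lenC_eq (k v) q.+1) ?(@lenC_eq (k v + 2) q); [|lia|lia].
under [in RHS]eq_bigr do rewrite coef_seq2.
rewrite coef_seq1 big_split /= -mulr_sumr.
by rewrite [X in _ = 2 * (_ + _ * X) + _]big_nat_recr //= /T; ring.
Qed.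

Lemma genC_relIIadd_adj k u : u != v -> e u v -> is_char m1 e k -> k u = - m u ->
  in_imA (extend genC [:: (1, k); (- (-1) ^ m u, kadd m e u k)]).
Proof.
move=> huv he hk hu; have LP := in_imA_lin_closed; set c : K := - (-1) ^ m u.
have hKv : kadd m e u k v = k v - 2 by rewrite kaddE /pair_vv (negbTE huv) he; ring.
case/dvdzP: (char_parity v hk) => z hz; rewrite m1_v in hz.
case: (lerP p%:Z (k v - 2)) => hkv.
  apply: (lin_closed_coef LP (lin_closed_nil LP)) => x.
  by rewrite coef_extend2 !coef_genC hKv !lenC_ge ?big_geq ?coef_nil; [ring | lia..].
have [q hq] : exists q : nat, k v - 2 = p%:Z - 1 - 2 * q%:Z by exists (absz (p%:Z - z)%R); lia.
set T := kshift v (kadd m e u k) (1 + 2 * q%:Z).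
have hT : is_char m e T.
  by apply: char_from_m1_odd; rewrite -kadd_m1_ne //; apply: char_kadd.
have hTu : T u = m u by rewrite /T kshift_ne // kaddE /pair_vv eqxx hu; ring.
have hT'v : ksub m e u T v = p%:Z + 2.
  by rewrite ksubE /pair_vv (negbTE huv) he /T kshiftv hKv; lia.
apply: (lin_closed_sum2 (r := index_iota 0 q) (c := 2)
  (f := fun l : nat =>
     [:: (1, kshift v k (1 + 2 * l%:Z)); (c, kshift v (kadd m e u k) (1 + 2 * l%:Z))])
  (c1 := 2 * c) (c2 := - 2 * c * c) (s2 := [:: (1, ksub m e u T)])
  LP _ (in_imA_rel (in_rel_IIsub hT hTu))).
- by move=> l _; apply/in_imA_rel/in_rel_IIadd_kshift.
- by apply: in_imA_rel; apply: (in_rel_I (u := v) (char_ksub u hT)); rewrite hT'v mv; lia.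
move=> x; rewrite coef_extend2 !coef_genC hKv.
rewrite (@lenC_eq (k v - 2) q.+1) ?(@lenC_eq (k v) q); [|lia|lia].
under [in RHS]eq_bigr do rewrite coef_seq2.
rewrite coef_seq1 coef_seq2 big_split /= -mulr_sumr.
by rewrite [X in _ + _ * (_ * X) = _]big_nat_recr //= /T /c; ring.
Qed.

Lemma genC_relIIsub_ne k u : u != v -> is_char m1 e k -> k u = m1 u ->
  in_imA (extend genC [:: (1, k); (- (-1) ^ m1 u, ksub m1 e u k)]).
Proof.
move=> huv hk; rewrite ksub_m1_ne // m1_ne // => hu.
case he: (e u v); first exact: genC_relIIsub_adj.
apply: genC_pair_aligned => [|l]; first by rewrite ksubE /pair_vv (negbTE huv) he; ring.
exact: in_rel_IIsub_kshift.
Qed.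

Lemma genC_relIIadd_ne k u : u != v -> is_char m1 e k -> k u = - m1 u ->
  in_imA (extend genC [:: (1, k); (- (-1) ^ m1 u, kadd m1 e u k)]).
Proof.
move=> huv hk; rewrite kadd_m1_ne // m1_ne // => hu.
case he: (e u v); first exact: genC_relIIadd_adj.
apply: genC_pair_aligned => [|l]; first by rewrite kaddE /pair_vv (negbTE huv) he; ring.
exact: in_rel_IIadd_kshift.
Qed.

Lemma genC_rel r : basic_rel m1 e r -> in_imA (extend genC r).
Proof.
case=> k [u [hk [[hu ->]|[[hu ->]|[hu ->]]]]]; first exact: genC_relI hu.
- by case: (eqVneq u v) hu => [->|huv] hu; [exact: genC_relIIsub_v | exact: genC_relIIsub_ne].
- by case: (eqVneq u v) hu => [->|huv] hu; [exact: genC_relIIadd_v | exact: genC_relIIadd_ne].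
Qed.

Lemma in_free_extend_genC z : in_free m1 e z -> in_free m e (extend genC z).
Proof.
move=> hz x; rewrite coef_extend (sum_coef_undup z (fun y => coef (genC y) x)).
case/sumr_neq0P => y _.
rewrite mulf_eq0 negb_or coef_genC mulf_eq0 negb_or => /and3P[hy _ /sumr_neq0P [l _]].
case: (eqVneq (kshift v y (1 + 2 * l%:Z)) x) => [<- _|_]; last by rewrite eqxx.
exact: char_from_m1_odd (hz y hy).
Qed.

Lemma imA_sub_kerB s : in_imA s -> in_rel m1 e (mapB v s).
Proof.
case=> t [ht hr].
apply: (lin_closed2 (c1 := 1) (c2 := 1) in_rel_m1_lin
  (lin_closed_extend_rel in_rel_m1_lin genB_rel hr)
  (lin_closed_extend (g := fun k' => extend genB (genA k')) in_rel_m1_lin _)) => [x /ht|k].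
  exact: genB_genA.
rewrite !coef_extend coef_mapB (sum_csub _ _ (fun y => coef (genB y) k)).
rewrite (sum_mapA _ (fun y => coef (genB y) k)) !mul1r.
under [X in _ = _ + X]eq_bigr do rewrite coef_extend.
by rewrite subrK.
Qed.

Lemma kerB_sub_imA s : in_free m e s -> in_rel m1 e (mapB v s) -> in_imA s.
Proof.
move=> hs hB; have LP := in_imA_lin_closed.
apply: (lin_closed2 (c1 := 1) (c2 := 1) LP (lin_closed_extend_rel LP genC_rel hB)
  (lin_closed_extend (g := fun k => csub [:: (1, k)] (extend genC (genB k))) LP _)) => [x /hs|k].
  exact: genC_genB.
rewrite !coef_extend (sum_mapB _ (fun y => coef (genC y) k)) coef_combE !mul1r -big_split.
by apply: eq_bigr => q _ /=; rewrite coef_csub coef_seq1 coef_extend -mulrDr addrC subrK.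
Qed.

Lemma mapB_extend_genC z : in_free m1 e z -> in_rel m1 e (csub z (mapB v (extend genC z))).
Proof.
move=> hz.
pose BC k := csub [:: (1, k)] (extend genB (genC k)).
apply: (lin_closed_coef in_rel_m1_lin (lin_closed_extend (g := BC) in_rel_m1_lin _)).
  by move=> x /hz; apply: genB_genC.
move=> k; rewrite coef_csub coef_mapB (sum_extend _ _ (fun y => coef (genB y) k)).
rewrite coef_combE coef_extend.
by rewrite -sumrB; apply: eq_bigr => q _; rewrite coef_csub coef_seq1 coef_extend mulrBr.
Qed.

End Exactness.

Theorem lemma5p2 (R : realType) (V : finType) (m : V -> int) (e : rel V)
  (v : V) (p : nat) :
  is_forest e -> neg_definite m e ->
  (0 < p)%N -> m v = - (p%:Z) ->
  neg_definite (plus1_m m v p) e ->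
  (* exactness at H(Gamma): ker B = im A *)
  (forall s : comb R[i] V, in_free m e s ->
     (in_rel (plus1_m m v p) e (mapB v s) <->
      exists t : comb R[i] (subv v), in_free (del_m m v) (del_e e v) t /\
                 in_rel m e (csub s (mapA v p t))))
  /\
  (* exactness at H(Gamma_{+1}): B is surjective *)
  (forall z : comb R[i] V, in_free (plus1_m m v p) e z ->
     exists s : comb R[i] V, in_free m e s /\
                 in_rel (plus1_m m v p) e (csub z (mapB v s))).
Proof.
move=> [se _ _] _ p_gt0 mv _.
have two_neq0 : (2 : R[i]) != 0 by rewrite pnatr_eq0.
split=> [s hs|z hz].
  by split; [exact: kerB_sub_imA | exact: imA_sub_kerB].
exists (extend (@genC _ _ v p) z).
by split; [exact: in_free_extend_genC | exact: mapB_extend_genC].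
Qed.
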